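(* Assume the setting in the context, with $\theta=0$ (so $w>0$ and $\delta>0$). Set $A_m=\lfloor z_0/\delta\rfloor$. Write $x_0=\overline{x_0}\,w+\widehat{x_0}$, $l=\overline{l}\,w+\widehat{l}$ with $0\le\widehat{x_0},\widehat{l}<w$; when $y>0$ write $y_0=\overline{y_0}\,y+\widehat{y_0}$, $h=\overline{h}\,y+\widehat{h}$ with $0\le\widehat{y_0},\widehat{h}<y$. (ii.1) If $y=0$, then $$d(m,T)=(1+A_m)(1+A_m+\overline{x_0})+(\overline{l}-2)\frac{A_m(1+A_m)}{2}+\sum_{k=0}^{A_m}\left\lfloor\frac{\widehat{x_0}+k\widehat{l}}{w}\right\rfloor.\quad( ** )$$ (ii.2) If $y>0$, set $k_1=\left\lceil\frac{z_0y-y_0\delta}{a}\right\rceil$ (then $k_1\ge0$). (ii.2.1) If $k_1=0$, $d(m,T)$ is given by $( ** )$. (ii.2.2) If $1\le k_1\le A_m$, then $$d(m,T)=(1+A_m)(1+A_m+\overline{x_0})+k_1(\overline{y_0}-A_m)+(\overline{l}-2)\frac{A_m(1+A_m)}2+\overline{h}\frac{(k_1-1)k_1}2+\sum_{k=0}^{A_m}\left\lfloor\frac{\widehat{x_0}+k\widehat{l}}{w}\right\rfloor+\sum_{k=0}^{k_1-1}\left\lfloor\frac{\widehat{y_0}+k\widehat{h}}{y}\right\rfloor.$$ (ii.2.3) If $k_1>A_m$, then $$d(m,T)=(1+A_m)(1+\overline{x_0}+\overline{y_0})+(\overline{l}+\overline{h}-2)\frac{A_m(1+A_m)}2+\sum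_{k=0}^{A_m}\left\lfloor\frac{\widehat{x_0}+k\widehat{l}}{w}\right\rfloor+\sum_{k=0}^{A_m}\left\lfloor\frac{\widehat{y_0}+k\widehat{h}}{y}\right\rfloor.$$
   Context: Let $a<b<c$ be positive integers with $\gcd(a,b,c)=1$ and $T=\langle a,b,c\rangle=\{xa+yb+zc:x,y,z\in\mathbb N\}$. For $m\in T$, the denumerant $d(m,T)$ is the number of $(x,y,z)\in\mathbb N^3$ with $xa+yb+zc=m$. For $(i,j)\in\mathbb N^2$ let $[\![i,j]\!]=[i,i+1)\times[j,j+1)\subset\mathbb R^2$. For integers $0\le w<l$, $0\le y<h$, the L-shape $\mathrm L(l,h,w,y)$ is the set of unit squares $[\![i,j]\!]$ with $0\le i<l$, $0\le j<h$, excluding those with $i\ge l-w$ and $j\ge h-y$ (it has $lh-wy$ squares). An L-shape $\mathcal H$ is related to $T$ if it consists of exactly $c$ squares, every residue class modulo $c$ equals $ia+jb \bmod c$ for exactly one $[\![i,j]\!]\in\mathcal H$, and for each $[\![i,j]\!]\in\mathcal H$, $ia+jb=\min\{sa+tb:(s,t)\in\mathbb N^2,\ sa+tb\equiv ia+jb \pmod c\}$. Setting: $\mathcal H=\mathrm L(l,h,w,y)$ is an L-shape related to $T$, and $\delta=(la-yb)/c$, $\theta=(hb-wa)/c$; it is known that $\delta,\theta$ are nonnegative integers with $\delta+\theta>0$, $a=h\delta+y\theta$, $b=w\delta+l\theta$, $lh-wy=c$. For $m\in T$, the basic factorization of $m$ with respect to $\mathcal H$ is the unique $(x_0,y_0,z_0)\in\mathbb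 N^3$ with $x_0a+y_0b+z_0c=m$ and $[\![x_0,y_0]\!]\in\mathcal H$. Fix $m\in T$ with basic factorization $(x_0,y_0,z_0)$. *)

From mathcomp Require Import all_boot all_order all_algebra.
Set Implicit Arguments. Unset Strict Implicit. Unset Printing Implicit Defensive.
Import Order.TTheory GRing.Theory Num.Theory.

(* Denumerant d(m,T) of T = <a,b,c>: the number of (x,y,z) in N^3 with
   x a + y b + z c = m.  For a,b,c >= 1 every such x,y,z is <= m, so the
   bounded count below is exactly the number of such triples. *)
Definition denumerant (a b c m : nat) : nat :=
  \sum_(x < m.+1) \sum_(y < m.+1) \sum_(z < m.+1) (x * a + y * b + z * c == m).

Definition inL (l h w y i j : nat) : bool :=
  [&& i < l, j < h & ~~ ((l - w <= i) && (h - y <= j))].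

Definition related (a b c l h w y : nat) : Prop :=
  [/\
      \sum_(i < l) \sum_(j < h) inL l h w y i j = c,
      (forall r, r < c ->
         \sum_(i < l) \sum_(j < h)
            (inL l h w y i j && ((i * a + j * b) %% c == r)) = 1) &
      (forall i j, inL l h w y i j ->
         forall s t, s * a + t * b = i * a + j * b %[mod c] ->
           i * a + j * b <= s * a + t * b)].

Definition floor_sum (u v w n : nat) : nat :=
  \sum_(k < n.+1) ((u + k * v) %/ w).

Definition ceil_div (n : int) (a : nat) : int := - ((- n) %/ (a : int))%Z.

From mathcomp Require Import all_boot all_order all_algebra.
From mathcomp Require Import zify ring.
Import Order.TTheory GRing.Theory Num.Theory.

(* With theta = 0 one has a = h delta, b = w delta and c = l h - w y, and every
   factorization of m arises from the basic one by the shift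
     (x0, y0, z0) -> (x0 + i l - j w, y0 + j h - i y, z0 - i delta):
   minimality of the basic factorization forces i >= 0, and the coprimality of
   delta, c and of w, h makes i and j integers.  Hence d(m, T) is the number of lattice
   points (i, j) with i <= A, j w <= x0 + i l and i y <= y0 + j h.  Counted along
   i this is the sum of floor((x0 + i l) / w) + 1 when y = 0; when y > 0 one
   subtracts, for each j, the excess A - floor((y0 + j h) / y) (truncated at 0),
   which vanishes for j >= k1.  Splitting every floor into quotient and remainder parts
   gives the closed forms. *)

Lemma sum_ord_ltn n K : \sum_(i < n) (i < K : nat) = minn n K.
Proof.
elim: n => [|n IH]; first by rewrite big_ord0 min0n.
by rewrite big_ord_recr /= IH; case: ltnP; lia.
Qed.

Lemma sum_ord_gtn n K : \sum_(i < n) (K < i : nat) = n - minn n K.+1.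
Proof.
elim: n => [|n IH]; first by rewrite big_ord0.
by rewrite big_ord_recr /= IH; case: ltnP; lia.
Qed.

Lemma sum_ord_mul_leq n w X :
  0 < w -> \sum_(j < n) (j * w <= X : nat) = minn n (X %/ w).+1.
Proof.
move=> w_gt0; rewrite -sum_ord_ltn; apply: eq_bigr => j _.
by rewrite ltnS leq_divRL.
Qed.

Lemma sum_ord_id n : \sum_(i < n) i = ((n - 1) * n) %/ 2.
Proof.
by rewrite -(big_mkord xpredT (fun i => i)) bin2_sum bin2 divn2 subn1 mulnC.
Qed.

Lemma sum_ord_trunc n N (F : nat -> nat) :
  n <= N -> (forall j, n <= j < N -> F j = 0) ->
  \sum_(j < N) F j = \sum_(j < n) F j.
Proof.
move=> le_nN F0; rewrite -!(big_mkord xpredT) (big_cat_nat (leq0n n) le_nN) /=.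
rewrite [X in _ + X]big1_seq ?addn0 // => j /andP[_].
by rewrite mem_index_iota; exact: F0.
Qed.

Lemma sum_pred_bij (T1 T2 : finType) (P : pred T1) (Q : pred T2) (f : T2 -> T1) :
  {in Q &, injective f} -> {in Q, forall q, P (f q)} ->
  (forall p, P p -> exists2 q, Q q & f q = p) ->
  \sum_(p : T1) (P p : nat) = \sum_(q : T2) (Q q : nat).
Proof.
move=> f_inj fQP f_onto.
have sum_card (T : finType) (R : pred T) : \sum_(p : T) (R p : nat) = #|R|.
  rewrite -sum1_card [RHS]big_mkcond; apply: eq_bigr => p _.
  by rewrite unfold_in; case: (R p).
rewrite !sum_card -(card_in_imset f_inj); apply: eq_card => p.
apply/idP/imsetP => [/f_onto[q Qq <-]|[q Qq ->]]; last exact: fQP.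
by exists q.
Qed.

Lemma divn_affine u v i w : 0 < w ->
  (u + i * v) %/ w = u %/ w + i * (v %/ w) + (u %% w + i * (v %% w)) %/ w.
Proof.
move=> w_gt0.
have -> : u + i * v = (u %/ w + i * (v %/ w)) * w + (u %% w + i * (v %% w)).
  by rewrite {1}(divn_eq u w) {1}(divn_eq v w); ring.
by rewrite divnMDl.
Qed.

Lemma sum_divn_affine n u v w : 0 < w ->
  \sum_(i < n) ((u + i * v) %/ w) =
  n * (u %/ w) + (v %/ w) * ((n - 1) * n %/ 2)
  + \sum_(i < n) ((u %% w + i * (v %% w)) %/ w).
Proof.
move=> w_gt0; under eq_bigr => i _ do rewrite (divn_affine _ _ _ _ w_gt0).
rewrite !big_split /= sum_nat_const card_ord -big_distrl /= sum_ord_id; ring.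
Qed.

Lemma coprime_lin_sol {w h x y X Y} :
  0 < w -> coprime w h -> Y < h -> x * h + y * w = X * h + Y * w ->
  exists j, x + j * w = X /\ y = Y + j * h.
Proof.
move=> w_gt0 cop_wh lt_Yh e.
have dvd_w k1 k2 : k1 * h = k2 * w -> w %| k1.
  by move=> ek; rewrite -(Gauss_dvdl _ cop_wh) ek dvdn_mull.
case: (leqP x X) => [le_xX | lt_Xx].
  have ex : (X - x) * h = (y - Y) * w.
    have : x * h <= X * h by rewrite leq_mul2r le_xX orbT.
    by rewrite !mulnBl; lia.
  have /divnK ej := dvd_w _ _ ex; set j := (X - x) %/ w in ej.
  have ey : y - Y = j * h.
    by apply/eqP; rewrite -(eqn_pmul2r w_gt0) mulnAC ej ex.
  have : Y * w <= y * w by nia.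
  by rewrite leq_pmul2r // => le_Yy; exists j; lia.
have ex : (x - X) * h = (Y - y) * w.
  have : X * h <= x * h by rewrite leq_mul2r ltnW ?orbT.
  by rewrite !mulnBl; lia.
have /divnK ek := dvd_w _ _ ex; set k := (x - X) %/ w in ek.
have eY : Y - y = k * h.
  by apply/eqP; rewrite -(eqn_pmul2r w_gt0) mulnAC ek ex.
have k_gt0 : 0 < k by rewrite lt0n; apply/eqP => k0; move: ek; rewrite k0; lia.
have : h <= k * h by rewrite leq_pmull.
lia.
Qed.

Lemma card_inL l h w y : w <= l -> y <= h ->
  \sum_(i < l) \sum_(j < h) (inL l h w y i j : nat) = l * h - w * y.
Proof.
move=> le_wl le_yh.
have col i : i < l -> \sum_(j < h) (inL l h w y i j : nat) = (h - y) + y * (i < l - w).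
  move=> lt_il; rewrite /inL lt_il /=.
  transitivity (\sum_(j < h) ((i < l - w) || (j < h - y) : nat)).
    by apply: eq_bigr => j _; rewrite ltn_ord /=; case: (ltnP i (l - w)); case: ltnP.
  case: ltnP => _ /=; last by rewrite sum_ord_ltn; lia.
  by rewrite sum_nat_const card_ord muln1; lia.
under eq_bigr => i _ do rewrite col //.
rewrite big_split /= sum_nat_const card_ord.
rewrite -big_distrr /= sum_ord_ltn; nia.
Qed.

Lemma related_card {a b c l h w y} : 0 < c -> w <= l -> y <= h ->
  related a b c l h w y -> c + w * y = l * h.
Proof. by move=> c_gt0 le_wl le_yh [+ _ _]; rewrite card_inL //; lia. Qed.

(* With theta = 0, c a = h (l a) - y (w a) = h (delta c + y b) - y (h b) = h delta c. *)
Lemma theta0_generators {a b c l h w y delta} :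
  0 < c -> 0 < h -> c + w * y = l * h ->
  delta * c + y * b = l * a -> h * b = w * a ->
  a = h * delta /\ b = w * delta.
Proof.
move=> c_gt0 h_gt0 hc hdelta htheta.
have ea : a = h * delta.
  apply/eqP; rewrite -(eqn_pmul2l c_gt0); apply/eqP.
  have := congr1 (muln h) hdelta; have := congr1 (muln y) htheta.
  have := congr1 (muln a) hc; lia.
split=> //; apply/eqP; rewrite -(eqn_pmul2l h_gt0) htheta ea; apply/eqP; ring.
Qed.

Lemma theta0_coprime {a b c l h w y delta} :
  gcdn (gcdn a b) c = 1 -> a = h * delta -> b = w * delta ->
  c + w * y = l * h -> coprime w h /\ coprime delta c.
Proof.
move=> hgcd ea eb hc; rewrite ea eb in hgcd; rewrite /coprime -!dvdn1 -hgcd !dvdn_gcd.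
split; last by rewrite !dvdn_mull ?dvdn_gcdl ?dvdn_gcdr.
have g_wy : gcdn w h %| w * y by rewrite dvdn_mulr ?dvdn_gcdl.
have : gcdn w h %| c + w * y by rewrite hc dvdn_mull ?dvdn_gcdr.
rewrite (dvdn_addl _ g_wy) => ->.
by rewrite dvdn_mulr ?dvdn_gcdr // dvdn_mulr ?dvdn_gcdl.
Qed.

(* Any J >= x0 + A l bounds j without loss (see sum_lattice_columns). *)
Definition lattice_count (A J l h w y x0 y0 : nat) : nat :=
  \sum_(i < A.+1) \sum_(j < J.+1)
     ((j * w <= x0 + i * l) && (i * y <= y0 + j * h) : nat).

Section Theta0Factorizations.

Variables a b c l h w y delta m x0 y0 z0 : nat.
Hypotheses (c_gt0 : 0 < c) (w_gt0 : 0 < w) (delta_gt0 : 0 < delta).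
Hypotheses (ea : a = h * delta) (eb : b = w * delta) (hc : c + w * y = l * h).
Hypotheses (cop_wh : coprime w h) (cop_dc : coprime delta c).
Hypotheses (y0_lt_h : y0 < h) (hm : x0 * a + y0 * b + z0 * c = m).
Hypothesis hmin : forall s t,
  s * a + t * b = x0 * a + y0 * b %[mod c] -> x0 * a + y0 * b <= s * a + t * b.

Lemma factorization_shift i j :
  j * w <= x0 + i * l -> i * y <= y0 + j * h -> i * delta <= z0 ->
  (x0 + i * l - j * w) * a + (y0 + j * h - i * y) * b + (z0 - i * delta) * c = m.
Proof.
move=> le_jw le_iy le_idelta; rewrite -hm ea eb.
have := congr1 (muln (i * delta)) hc; rewrite !mulnBl; nia.
Qed.

Lemma factorization_bound {x1 y1 z1} : x1 * a + y1 * b + z1 * c = m ->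
  [/\ x1 < m.+1, y1 < m.+1 & z1 < m.+1].
Proof.
have a_gt0 : 0 < a by rewrite ea muln_gt0 delta_gt0 andbT; exact: leq_ltn_trans y0_lt_h.
have b_gt0 : 0 < b by rewrite eb muln_gt0 w_gt0.
move=> <-; rewrite !ltnS; split; nia.
Qed.

Lemma factorization_z_le {x1 y1 z1} : x1 * a + y1 * b + z1 * c = m -> z1 <= z0.
Proof.
move=> hf; rewrite leqNgt; apply/negP => lt_z0z1.
have e : (z1 - z0) * c + (x1 * a + y1 * b) = x0 * a + y0 * b.
  have : z0 * c <= z1 * c by rewrite leq_mul2r ltnW ?orbT.
  by rewrite mulnBl; lia.
have := hmin x1 y1; rewrite -e modnMDl => /(_ erefl).
have : c <= (z1 - z0) * c by rewrite leq_pmull // subn_gt0.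
lia.
Qed.

Lemma factorization_is_shift {x1 y1 z1} : x1 * a + y1 * b + z1 * c = m ->
  exists i j, [/\ i * delta + z1 = z0, x1 + j * w = x0 + i * l
                & y1 + i * y = y0 + j * h].
Proof.
move=> hf; have le_z := factorization_z_le hf.
have e_delta : (z0 - z1) * c = delta * (x1 * h + y1 * w - (x0 * h + y0 * w)).
  move: hf hm; rewrite ea eb mulnBr => hf hm'.
  have : z1 * c <= z0 * c by rewrite leq_mul2r le_z orbT.
  rewrite mulnBl; nia.
have /divnK ei : delta %| z0 - z1.
  by rewrite -(Gauss_dvdl _ cop_dc) e_delta dvdn_mulr.
set i := (z0 - z1) %/ delta in ei.
have e_i : x1 * h + (y1 + i * y) * w = (x0 + i * l) * h + y0 * w.
  have : x1 * h + y1 * w = x0 * h + y0 * w + i * c.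
    apply/eqP; rewrite -(eqn_pmul2l delta_gt0); apply/eqP.
    move: e_delta; rewrite -ei; nia.
  have := congr1 (muln i) hc; nia.
have [j [ex ey]] := coprime_lin_sol w_gt0 cop_wh y0_lt_h e_i.
by exists i, j; split; lia.
Qed.

Lemma denumerant_lattice_count :
  denumerant a b c m =
  lattice_count (z0 %/ delta) (x0 + z0 %/ delta * l) l h w y x0 y0.
Proof.
set A := z0 %/ delta; set J := x0 + A * l.
have le_idelta (i : 'I_A.+1) : i * delta <= z0 by rewrite -leq_divRL // -ltnS.
pose Q (q : 'I_A.+1 * 'I_J.+1) :=
  (q.2 * w <= x0 + q.1 * l) && (q.1 * y <= y0 + q.2 * h).
pose shift (q : 'I_A.+1 * 'I_J.+1) : ('I_m.+1 * 'I_m.+1) * 'I_m.+1 :=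
  (inord (x0 + q.1 * l - q.2 * w), inord (y0 + q.2 * h - q.1 * y),
   inord (z0 - q.1 * delta)).
have shift_fact q : Q q ->
  (x0 + q.1 * l - q.2 * w) * a + (y0 + q.2 * h - q.1 * y) * b
  + (z0 - q.1 * delta) * c = m.
  by case/andP=> le_jw le_iy; exact: factorization_shift.
have shiftE q : Q q -> [/\ (shift q).1.1 = x0 + q.1 * l - q.2 * w :> nat,
    (shift q).1.2 = y0 + q.2 * h - q.1 * y :> nat
  & (shift q).2 = z0 - q.1 * delta :> nat].
  by move=> Qq; have [? ? ?] := factorization_bound (shift_fact q Qq); rewrite !inordK.
rewrite /denumerant /lattice_count pair_bigA pair_bigA /= pair_bigA /=.
apply: (@sum_pred_bij _ _ _ Q shift) => [q1 q2 Q1 Q2 e| q Qq|].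
- have [ex1 _ ez1] := shiftE q1 Q1; have [ex2 _ ez2] := shiftE q2 Q2.
  move: q1 q2 e Q1 Q2 ex1 ez1 ex2 ez2 => [i1 j1] [i2 j2] -> /andP[/= le1 _] /andP[/= le2 _].
  move=> -> -> /=; move: (le_idelta i1) (le_idelta i2) => le_i1 le_i2 ex ez.
  have ei : i1 * delta = i2 * delta by lia.
  move/eqP: ei; rewrite eqn_pmul2r // => /eqP/val_inj ei; subst i2.
  have ej : j1 * w = j2 * w by lia.
  by move/eqP: ej; rewrite eqn_pmul2r // => /eqP/val_inj ->.
- by have [-> -> ->] := shiftE q Qq; apply/eqP/shift_fact.
move=> [[x1 y1] z1] /eqP /= hf.
have [i [j [ez ex ey]]] := factorization_is_shift hf.
have lt_iA : i < A.+1 by rewrite ltnS leq_divRL //; lia.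
have lt_jJ : j < J.+1.
  have : i * l <= A * l by rewrite leq_mul2r -ltnS lt_iA orbT.
  have : j <= j * w by rewrite leq_pmulr.
  lia.
have Qij : Q (Ordinal lt_iA, Ordinal lt_jJ) by apply/andP; split=> /=; lia.
exists (Ordinal lt_iA, Ordinal lt_jJ) => //.
have [/= e1 e2 e3] := shiftE _ Qij.
by congr (_, _, _); apply: val_inj; rewrite /= ?e1 ?e2 ?e3; lia.
Qed.

End Theta0Factorizations.

Section LatticeCount.

Context {A J l h w y x0 y0 : nat}.
Hypotheses (w_gt0 : 0 < w) (le_wl : w <= l) (le_J : x0 + A * l <= J).

Lemma sum_lattice_columns :
  \sum_(i < A.+1) \sum_(j < J.+1) (j * w <= x0 + i * l : nat)
  = \sum_(i < A.+1) ((x0 + i * l) %/ w).+1.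
Proof.
apply: eq_bigr => i _; rewrite sum_ord_mul_leq //.
have : i * l <= A * l by rewrite leq_mul2r -ltnS ltn_ord orbT.
have := leq_div (x0 + i * l) w; lia.
Qed.

Lemma lattice_count_y0 :
  lattice_count A J l h w 0 x0 y0 = \sum_(i < A.+1) ((x0 + i * l) %/ w).+1.
Proof.
rewrite -sum_lattice_columns; apply: eq_bigr => i _; apply: eq_bigr => j _.
by rewrite muln0 andbT.
Qed.

(* A pair (i, j) with j w <= x0 + i l fails i y <= y0 + j h exactly when
   (y0 + j h) / y < i, and then j < i forces j w <= x0 + i l. *)
Lemma lattice_count_add_excess : 0 < y -> y <= h ->
  lattice_count A J l h w y x0 y0 + \sum_(j < J.+1) (A - (y0 + j * h) %/ y)
  = \sum_(i < A.+1) ((x0 + i * l) %/ w).+1.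
Proof.
move=> y_gt0 le_yh; rewrite -sum_lattice_columns.
have -> : \sum_(j < J.+1) (A - (y0 + j * h) %/ y)
    = \sum_(i < A.+1) \sum_(j < J.+1) (y0 + j * h < i * y : nat).
  rewrite exchange_big /=; apply: eq_bigr => j _.
  under eq_bigr => i _ do rewrite -ltn_divLR //.
  by rewrite sum_ord_gtn; lia.
rewrite -big_split /=; apply: eq_bigr => i _; rewrite -big_split /=.
apply: eq_bigr => j _; case: leqP => [_|lt_iy]; first by rewrite andbT addn0.
have lt_ji : j < i.
  rewrite -(ltn_pmul2r (leq_trans y_gt0 le_yh)).
  have : i * y <= i * h by rewrite leq_mul2l le_yh orbT.
  lia.
suff -> : j * w <= x0 + i * l by [].
by apply: leq_trans (leq_addl _ _); apply: leq_mul; lia.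
Qed.

End LatticeCount.

Lemma sum_divn_succ_affine A u v w : 0 < w ->
  \sum_(i < A.+1) ((u + i * v) %/ w).+1 =
  A.+1 * (u %/ w).+1 + (v %/ w) * (A * (1 + A) %/ 2)
  + floor_sum (u %% w) (v %% w) w A.
Proof.
move=> w_gt0; under eq_bigr => i _ do rewrite -addn1.
rewrite big_split /= sum_divn_affine // sum_nat_const card_ord subn1 /= add1n mulnC.
rewrite /floor_sum; ring.
Qed.

(* The quotient (y0 + j h) / y is at most A for j < n1 and at least A for
   j >= n1 or j >= A, so only the first minn n1 A.+1 columns contribute. *)
Lemma sum_excess {A J h y y0 z0 delta n1} :
  0 < y -> 0 < delta -> y <= h -> A = z0 %/ delta -> A <= J ->
  (forall j, (j < n1) = ((y0 + j * h) * delta < z0 * y)) ->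
  \sum_(j < J.+1) (A - (y0 + j * h) %/ y)
  + \sum_(j < minn n1 A.+1) ((y0 + j * h) %/ y) = minn n1 A.+1 * A.
Proof.
move=> y_gt0 delta_gt0 le_yh eA le_AJ hn1.
have le_A_z0 : A * delta <= z0 by rewrite eA leq_divM.
have lt_z0_A : z0 < A.+1 * delta by rewrite eA -ltn_divLR.
have before j : j < n1 -> (y0 + j * h) %/ y <= A.
  rewrite hn1 => lt_j; rewrite eA leq_divRL // -(leq_pmul2r y_gt0).
  have := leq_divM (y0 + j * h) y; nia.
have after j : n1 <= j -> A <= (y0 + j * h) %/ y.
  rewrite leqNgt hn1 -leqNgt => le_j; rewrite leq_divRL //.
  rewrite -(leq_pmul2r delta_gt0); nia.
have late j : A <= j -> A <= (y0 + j * h) %/ y.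
  move=> le_Aj; rewrite leq_divRL //.
  have : j * y <= j * h by rewrite leq_mul2l le_yh orbT.
  nia.
rewrite (@sum_ord_trunc (minn n1 A.+1) J.+1 (fun j => A - (y0 + j * h) %/ y)).
- rewrite -big_split /= -[in RHS](card_ord (minn n1 A.+1)) -sum_nat_const.
  apply: eq_bigr => j _.
  have : j < n1 by apply: leq_trans (ltn_ord j) (geq_minl _ _).
  by move/before; lia.
- by apply: leq_trans (geq_minr _ _) _.
move=> j /andP[]; rewrite geq_min => /orP[/after|/ltnW/late] le_A _; lia.
Qed.

Lemma lattice_count_ypos {A J l h w y x0 y0 z0 delta n1} :
  0 < w -> w <= l -> x0 + A * l <= J -> 0 < y -> y <= h -> 0 < delta ->
  A = z0 %/ delta -> (forall j, (j < n1) = ((y0 + j * h) * delta < z0 * y)) ->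
  lattice_count A J l h w y x0 y0 + minn n1 A.+1 * A =
  \sum_(i < A.+1) ((x0 + i * l) %/ w).+1
  + (minn n1 A.+1 * (y0 %/ y)
     + (h %/ y) * ((minn n1 A.+1 - 1) * minn n1 A.+1 %/ 2)
     + \sum_(i < minn n1 A.+1) ((y0 %% y + i * (h %% y)) %/ y)).
Proof.
move=> w_gt0 le_wl le_J y_gt0 le_yh delta_gt0 eA hn1.
have le_AJ : A <= J by have := leq_pmulr A (leq_trans w_gt0 le_wl); lia.
rewrite -(lattice_count_add_excess (y0 := y0) w_gt0 le_wl le_J y_gt0 le_yh).
rewrite -sum_divn_affine //.
by rewrite -(sum_excess y_gt0 delta_gt0 le_yh eA le_AJ hn1) addnA.
Qed.

Lemma theta0_setting {a b c l h w y delta m x0 y0 z0} :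
  0 < a -> a < b -> b < c -> gcdn (gcdn a b) c = 1 -> w < l -> y < h ->
  related a b c l h w y -> delta * c + y * b = l * a -> h * b = w * a ->
  x0 * a + y0 * b + z0 * c = m -> inL l h w y x0 y0 ->
  [/\ 0 < w, 0 < delta, a = h * delta, y0 < h &
      denumerant a b c m =
      lattice_count (z0 %/ delta) (x0 + z0 %/ delta * l) l h w y x0 y0].
Proof.
move=> a_gt0 lt_ab lt_bc hgcd lt_wl lt_yh hrel hdelta htheta hm hL.
have c_gt0 : 0 < c by lia.
have hc := related_card c_gt0 (ltnW lt_wl) (ltnW lt_yh) hrel.
have [ea eb] := theta0_generators c_gt0 (leq_ltn_trans (leq0n y) lt_yh) hc hdelta htheta.
have [cop_wh cop_dc] := theta0_coprime hgcd ea eb hc.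
have delta_gt0 : 0 < delta by move: a_gt0; rewrite ea muln_gt0 => /andP[].
have w_gt0 : 0 < w by rewrite lt0n; apply: contraTneq lt_ab => w0; rewrite eb w0; lia.
have y0_lt_h : y0 < h by case/and3P: hL.
have [_ _ hmin] := hrel.
by split=> //; apply: denumerant_lattice_count; last exact: hmin.
Qed.

Local Open Scope ring_scope.

Lemma ceil_div_gt (N : int) (a : nat) (j : nat) : (0 < a)%N ->
  (j%:Z < ceil_div N a) = ((j * a)%:Z < N).
Proof.
move=> a_gt0; rewrite /ceil_div.
have a_neq0 : a%:Z != 0 by rewrite eqz_nat -lt0n.
have e := divz_eq (- N) a.
have r_ge0 := modz_ge0 (- N) a_neq0; have r_lt := ltz_mod (- N) a_neq0.
by apply/idP/idP => lt; nia.
Qed.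

Lemma ceil_div_ge0 (N : int) (a : nat) : (0 < a)%N -> - a%:Z < N -> 0 <= ceil_div N a.
Proof.
move=> a_gt0 lt_aN; rewrite /ceil_div.
have a_neq0 : a%:Z != 0 by rewrite eqz_nat -lt0n.
have e := divz_eq (- N) a; have := modz_ge0 (- N) a_neq0; nia.
Qed.

Lemma ceil_div_natP (N : int) (a : nat) : (0 < a)%N -> - a%:Z < N ->
  exists n : nat, ceil_div N a = n%:Z /\ forall j, (j < n)%N = ((j * a)%:Z < N).
Proof.
move=> a_gt0 lt_aN; exists `|ceil_div N a|%N.
rewrite gez0_abs ?ceil_div_ge0 //; split=> // j.
by rewrite -ltz_nat gez0_abs ?ceil_div_ge0 // ceil_div_gt.
Qed.

Theorem theorem6 (a b c l h w y delta m x0 y0 z0 : nat)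
  (ha : (0 < a)%N) (hab : (a < b)%N) (hbc : (b < c)%N)
  (hgcd : gcdn (gcdn a b) c = 1%N)
  (hwl : (w < l)%N) (hyh : (y < h)%N)
  (hrel : related a b c l h w y)
  (hdelta : (delta * c + y * b = l * a)%N)
  (htheta : (h * b = w * a)%N)
  (hbasic : (x0 * a + y0 * b + z0 * c = m)%N)
  (hL : inL l h w y x0 y0) :
  let d : int := (denumerant a b c m)%:Z in
  let A := (z0 %/ delta)%N in
  let x0bar := (x0 %/ w)%N in let x0hat := (x0 %% w)%N in
  let lbar := (l %/ w)%N in let lhat := (l %% w)%N in
  let tri := ((A * (1 + A)) %/ 2)%N in
  let F : int := ((1 + A) * (1 + A + x0bar))%N%:Z
                 + (lbar%:Z - 2) * tri%:Z
                 + (floor_sum x0hat lhat w A)%:Z in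
  ((y = 0)%N -> d = F) /\
  ((0 < y)%N ->
    let y0bar := (y0 %/ y)%N in let y0hat := (y0 %% y)%N in
    let hbar := (h %/ y)%N in let hhat := (h %% y)%N in
    let k1 : int := ceil_div ((z0 * y)%N%:Z - (y0 * delta)%N%:Z) a in
    [/\ 0 <= k1,
        k1 = 0 -> d = F,
        1 <= k1 <= A%:Z ->
          d = ((1 + A) * (1 + A + x0bar))%N%:Z
              + k1 * (y0bar%:Z - A%:Z)
              + (lbar%:Z - 2) * tri%:Z
              + (hbar * (((`|k1|%N - 1) * `|k1|%N) %/ 2))%N%:Z
              + (floor_sum x0hat lhat w A)%:Z
              + (\sum_(k < `|k1|%N) ((y0hat + k * hhat) %/ y))%N%:Z
      & A%:Z < k1 ->
          d = ((1 + A) * (1 + x0bar + y0bar))%N%:Z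
              + (lbar%:Z + hbar%:Z - 2) * tri%:Z
              + (floor_sum x0hat lhat w A)%:Z
              + (floor_sum y0hat hhat y A)%:Z]).
Proof.
move=> d A x0bar x0hat lbar lhat tri F.
have [w_gt0 delta_gt0 ea y0_lt_h hd] :=
  theta0_setting ha hab hbc hgcd hwl hyh hrel hdelta htheta hbasic hL.
rewrite -/A in hd.
have base := sum_divn_succ_affine A x0 l _ w_gt0.
rewrite -/x0bar -/x0hat -/lbar -/lhat -/tri in base.
have tri2 : (tri * 2 = A * (1 + A))%N.
  by rewrite divnK // dvdn2 oddM add1n /=; case: odd.
split.
  move=> y_eq0; rewrite /d hd y_eq0 (lattice_count_y0 w_gt0 (ltnW hwl) (leqnn _)) base.
  rewrite /F; lia.
move=> y_gt0 y0bar y0hat hbar hhat k1.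
have [n1 [-> hn1]] : exists n1 : nat,
    k1 = n1%:Z /\ forall j, (j < n1)%N = ((y0 + j * h) * delta < z0 * y)%N.
  have : (y0 * delta < h * delta)%N by rewrite ltn_pmul2r.
  rewrite -ea => lt_a.
  have [|n [en hn]] := ceil_div_natP ((z0 * y)%N%:Z - (y0 * delta)%N%:Z) _ ha.
    by clear -lt_a; lia.
  by exists n; split=> // j; rewrite hn ea; apply/idP/idP; clear; lia.
have := lattice_count_ypos (x0 := x0) w_gt0 (ltnW hwl) (leqnn _) y_gt0 (ltnW hyh)
  delta_gt0 (erefl A) hn1.
rewrite -hd base -/y0bar -/hbar -/y0hat -/hhat; set n' := minn n1 A.+1 => dE.
have tri_succ : ((A.+1 - 1) * A.+1 %/ 2 = tri)%N by rewrite /tri subn1 add1n.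
rewrite /d /F absz_nat; clearbody A x0bar x0hat lbar lhat tri y0bar y0hat hbar hhat.
split=> // [/eqP | /andP[_ le_n1A] | lt_An1].
- rewrite eqz_nat => /eqP n1_eq0.
  rewrite /n' n1_eq0 min0n big_ord0 !mul0n muln0 !addn0 in dE.
  by clear -dE tri2; lia.
- have n'_eq : n' = n1 by apply/minn_idPl/leqW; rewrite -lez_nat.
  rewrite n'_eq in dE.
  set T := ((n1 - 1) * n1 %/ 2)%N in dE *.
  set G := (\sum_(i < n1) ((y0hat + i * hhat) %/ y))%N in dE *.
  by clearbody T G; clear -dE tri2; lia.
have n'_eq : n' = A.+1 by apply/minn_idPr; rewrite -ltz_nat.
rewrite n'_eq tri_succ -/(floor_sum y0hat hhat y A) in dE.
by clear -dE tri2; lia.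
Qed.
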